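(* Let $K\subset\mathbb R^n$ be a convex body with $rB_2^n\subset K$ for some $r\in(0,1]$. Let $N=N(K,B_2^n)$ and let $x_1,\dots,x_N\in\mathbb R^n$ satisfy $K\subset\bigcup_{i=1}^N(x_i+B_2^n)$. For $\varepsilon\in(0,1)$ let $A_\varepsilon=\{\theta\in S^{n-1}:|\langle\hat x_i,\theta\rangle|\le\varepsilon$ for all $i$ with $x_i\ne0\}$, where $\hat x=x/|x|$. Then for every $\theta\in A_\varepsilon$ and every outer unit normal $u$ of $K$ at the boundary point $\rho_K(\theta)\theta$, one has \[ \langle u,\theta\rangle\ge r\sqrt{1-\varepsilon^2}. \]
   Context: A convex body is a compact convex set with nonempty interior. $B_2^n$ is the closed Euclidean unit ball, $S^{n-1}$ the unit sphere. The covering number is $N(K,T)=\min\{N:\exists x_1,\dots,x_N\in\mathbb R^n,\ K\subset\bigcup_{i=1}^N(x_i+T)\}$. The radial function is $\rho_K(\theta)=\sup\{t\ge0:t\theta\in K\}$. For $x\in\partial K$, an outer unit normal of $K$ at $x$ is a vector $u\in S^{n-1}$ with $\langle u,x\rangle=h_K(u):=\sup_{y\in K}\langle y,u\rangle$ (the set of these is the normal cone $n_K(x)$). *)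

From HB Require Import structures.
From mathcomp Require Import all_boot all_order all_algebra.
From mathcomp Require Import all_classical all_reals all_analysis.
Set Implicit Arguments. Unset Strict Implicit. Unset Printing Implicit Defensive.
Import Order.TTheory GRing.Theory Num.Theory.
Import numFieldNormedType.Exports.
Local Open Scope classical_set_scope.
Local Open Scope ring_scope.

Section Defs.
Variables (R : realType) (n : nat).
Notation vec := 'rV[R]_n.

Definition dotp (u v : vec) : R := \sum_(i < n) u 0 i * v 0 i.
Definition enorm (u : vec) : R := Num.sqrt (dotp u u).

Definition unit_ball : set vec := [set x | enorm x <= 1].
Definition unit_sphere : set vec := [set x | enorm x = 1].

Definition convex_set (K : set vec) : Prop :=
  forall x y (t : R), K x -> K y -> 0 <= t <= 1 -> K (t *: x + (1 - t) *: y).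
Definition convex_body (K : set vec) : Prop :=
  compact K /\ convex_set K /\ (K^°) !=set0.

Definition covers (K : set vec) (N : nat) (x : 'I_N -> vec) : Prop :=
  forall y, K y -> exists i : 'I_N, enorm (y - x i) <= 1.

Definition is_covering_number (K : set vec) (N : nat) : Prop :=
  (exists x : 'I_N -> vec, covers K x) /\
  (forall (M : nat) (x : 'I_M -> vec), covers K x -> (N <= M)%N).

Definition radial (K : set vec) (theta : vec) : R :=
  sup [set t : R | 0 <= t /\ K (t *: theta)].

Definition support_fun (K : set vec) (u : vec) : R :=
  sup [set dotp y u | y in K].

Definition outer_unit_normal (K : set vec) (x u : vec) : Prop :=
  unit_sphere u /\ dotp u x = support_fun K u.

Definition unitize (x : vec) : vec := (enorm x)^-1 *: x.

Definition A_eps (N : nat) (x : 'I_N -> vec) (eps : R) : set vec :=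
  [set theta | unit_sphere theta /\
     forall i : 'I_N, x i != 0 -> `|dotp (unitize (x i)) theta| <= eps].

End Defs.

(* Every point t theta of K on the ray through theta lies within distance 1 of some centre x_i,
   and theta is almost orthogonal to x_i; expanding |t theta - x_i|^2 <= 1 then forces
   t sqrt(1 - eps^2) <= 1, so rho_K(theta) <= 1 / sqrt(1 - eps^2).  Since r B_2^n is inside K,
   h_K(u) >= r, and h_K(u) = <u, rho_K(theta) theta> = rho_K(theta) <u, theta>. *)

From HB Require Import structures.
From mathcomp Require Import all_boot all_order all_algebra.
From mathcomp Require Import all_classical all_reals all_analysis.
From mathcomp Require Import lra.

Set Implicit Arguments.
Unset Strict Implicit.
Unset Printing Implicit Defensive.
Import Order.TTheory GRing.Theory Num.Theory.
Import numFieldNormedType.Exports.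
Local Open Scope classical_set_scope.
Local Open Scope ring_scope.

Section EuclideanSpace.
Variables (R : realType) (n : nat).
Implicit Types (u v w : 'rV[R]_n) (a : R).

Lemma dotpC u v : dotp u v = dotp v u.
Proof. by apply: eq_bigr => i _; rewrite mulrC. Qed.

Lemma dotpZl a u v : dotp (a *: u) v = a * dotp u v.
Proof. by rewrite /dotp mulr_sumr; apply: eq_bigr => i _; rewrite mxE mulrA. Qed.

Lemma dotpBl u v w : dotp (u - v) w = dotp u w - dotp v w.
Proof.
by rewrite /dotp -sumrB; apply: eq_bigr => i _; rewrite !mxE mulrBl.
Qed.

Lemma dotpZr a u v : dotp u (a *: v) = a * dotp u v.
Proof. by rewrite !(dotpC u) dotpZl. Qed.

Lemma dotpBr u v w : dotp u (v - w) = dotp u v - dotp u w.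
Proof. by rewrite !(dotpC u) dotpBl. Qed.

Lemma dotp0l v : dotp 0 v = 0.
Proof. by rewrite -(scale0r 0) dotpZl mul0r. Qed.

Lemma dotpp_ge0 u : 0 <= dotp u u.
Proof. by apply: sumr_ge0 => i _; rewrite -expr2 sqr_ge0. Qed.

Lemma dotpp_eq0 u : (dotp u u == 0) = (u == 0).
Proof.
apply/idP/eqP => [|->]; last by rewrite dotp0l.
rewrite psumr_eq0 => [/allP u0|i _]; last by rewrite -expr2 sqr_ge0.
apply/rowP => j; rewrite mxE.
by have := u0 j (mem_index_enum j); rewrite mulf_eq0 orbb => /eqP.
Qed.

Lemma enorm_ge0 u : 0 <= enorm u.
Proof. exact: sqrtr_ge0. Qed.

Lemma enorm0 : enorm (0 : 'rV[R]_n) = 0.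
Proof. by rewrite /enorm dotp0l sqrtr0. Qed.

Lemma sqr_enorm u : enorm u ^+ 2 = dotp u u.
Proof. by rewrite sqr_sqrtr // dotpp_ge0. Qed.

Lemma dotpp_enorm1 u : enorm u = 1 -> dotp u u = 1.
Proof. by rewrite -sqr_enorm => ->; rewrite expr1n. Qed.

Lemma dotpp_le1 u : enorm u <= 1 -> dotp u u <= 1.
Proof. by move=> u1; rewrite -sqr_enorm -(expr1n R 2) ler_pXn2r ?nnegrE ?enorm_ge0. Qed.

Lemma enorm_gt0 u : u != 0 -> 0 < enorm u.
Proof. by rewrite -dotpp_eq0 sqrtr_gt0 lt_def dotpp_ge0 andbT. Qed.

Lemma enormZ a u : enorm (a *: u) = `|a| * enorm u.
Proof. by rewrite /enorm dotpZl dotpZr mulrA -expr2 sqrtrM ?sqr_ge0 // sqrtr_sqr. Qed.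

Lemma dotp_le_mean u v : 2 * dotp u v <= dotp u u + dotp v v.
Proof.
have := dotpp_ge0 (u - v); rewrite !dotpBl !dotpBr (dotpC v u); lra.
Qed.

End EuclideanSpace.

Section RadialAndSupport.
Variables (R : realType) (n : nat).
Implicit Types (K : set 'rV[R]_n) (u theta : 'rV[R]_n).

Lemma dotp_le_eps_enorm (eps : R) (x theta : 'rV[R]_n) :
  (x != 0 -> `|dotp (unitize x) theta| <= eps) -> `|dotp x theta| <= eps * enorm x.
Proof.
have [->|x0] := eqVneq x 0; first by rewrite dotp0l enorm0 normr0 mulr0.
move=> /(_ isT); rewrite /unitize dotpZl normrM ger0_norm ?invr_ge0 ?enorm_ge0 //.
by rewrite mulrC ler_pdivrMr ?enorm_gt0.
Qed.

(* |t theta - x|^2 >= t^2 - 2 |t| eps |x| + |x|^2 = (|x| - |t| eps)^2 + t^2 (1 - eps^2). *)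
Lemma ray_point_near_bound (eps t : R) (x theta : 'rV[R]_n) :
  enorm theta = 1 -> `|dotp x theta| <= eps * enorm x ->
  enorm (t *: theta - x) <= 1 -> t ^+ 2 * (1 - eps ^+ 2) <= 1.
Proof.
move=> th1 hx /dotpp_le1.
rewrite !dotpBl !dotpBr !dotpZl !dotpZr dotpp_enorm1 // (dotpC theta x) mulr1.
rewrite -sqr_enorm; set a := enorm x; set d := dotp x theta => hsq.
have htd : t * d <= `|t| * (eps * a).
  by rewrite (le_trans (ler_norm _)) // normrM ler_wpM2l.
have t2 : t * t = `|t| ^+ 2 by rewrite real_normK ?num_real.
have : 0 <= (a - `|t| * eps) ^+ 2 by apply: sqr_ge0.
rewrite t2 in hsq; nra.
Qed.

Lemma covered_dotp_ub K N (x : 'I_N -> 'rV[R]_n) u :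
  covers K x -> enorm u = 1 -> exists M, forall y, K y -> dotp y u <= M.
Proof.
move=> cov u1; exists (1 + \sum_(i < N) `|dotp (x i) u|) => y /cov[i /dotpp_le1 yx].
have := dotp_le_mean (y - x i) u; rewrite dotpBl (dotpp_enorm1 u1).
have : dotp (x i) u <= \sum_(j < N) `|dotp (x j) u|.
  rewrite (le_trans (ler_norm _)) // (bigD1 i) //= lerDl.
  by apply: sumr_ge0 => j _; apply: normr_ge0.
lra.
Qed.

Lemma support_fun_ge_ball K N (x : 'I_N -> 'rV[R]_n) (r : R) u :
  covers K x -> 0 <= r -> (forall y, enorm y <= r -> K y) -> enorm u = 1 ->
  r <= support_fun K u.
Proof.
move=> cov r0 rB u1.
have [M hM] := covered_dotp_ub cov u1.
apply: sup_upper_bound.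
  split; first by exists (dotp 0 u), 0 => //; apply: rB; rewrite enorm0.
  by exists M => _ [y Ky <-]; apply: hM.
exists (r *: u); last by rewrite dotpZl dotpp_enorm1 ?mulr1.
by apply: rB; rewrite enormZ u1 mulr1 ger0_norm.
Qed.

Lemma radial_le K theta (b : R) :
  K 0 -> (forall t, 0 <= t -> K (t *: theta) -> t <= b) -> radial K theta <= b.
Proof.
move=> K0 hb; apply: ge_sup; last by move=> t [t0 /hb]; apply.
by exists 0; split; rewrite ?scale0r.
Qed.

Lemma radial_ge K theta (t b : R) :
  0 <= t -> K (t *: theta) -> (forall s, 0 <= s -> K (s *: theta) -> s <= b) ->
  t <= radial K theta.
Proof.
move=> t0 Kt hb; apply: sup_upper_bound; last by [].
by split; [exists t | exists b => s [s0 /hb]; apply].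
Qed.

End RadialAndSupport.

Theorem proposition2p4 (R : realType) (n : nat) (K : set 'rV[R]_n) (r : R)
  (N : nat) (x : 'I_N -> 'rV[R]_n) (eps : R) :
  convex_body K ->
  0 < r <= 1 ->
  (forall y : 'rV[R]_n, enorm y <= r -> K y) ->
  is_covering_number K N ->
  covers K x ->
  0 < eps < 1 ->
  forall theta : 'rV[R]_n, A_eps x eps theta ->
  forall u : 'rV[R]_n, outer_unit_normal K (radial K theta *: theta) u ->
  r * Num.sqrt (1 - eps ^+ 2) <= dotp u theta.
Proof.
move=> _ /andP[r0 _] rB _ cov /andP[e0 e1] theta [th1 thA] u [u1 hu].
set s := Num.sqrt (1 - eps ^+ 2).
have s0 : 0 < s by rewrite sqrtr_gt0; nra.
have ray_le : forall t, 0 <= t -> K (t *: theta) -> t <= s^-1.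
  move=> t t0 /cov[i /(ray_point_near_bound th1 (dotp_le_eps_enorm (thA i)))].
  have ss : s ^+ 2 = 1 - eps ^+ 2 by rewrite sqr_sqrtr //; nra.
  rewrite -ss -exprMn -(expr1n R 2) ler_pXn2r ?nnegrE ?mulr_ge0 ?(ltW s0) // => ts1.
  by rewrite -[s^-1]div1r ler_pdivlMr.
have K0 : K 0 by apply: rB; rewrite enorm0; apply: ltW.
have Kr : K (r *: theta) by apply: rB; rewrite enormZ th1 mulr1 ger0_norm // ltW.
have rho_s : radial K theta <= s^-1 := radial_le K0 ray_le.
have r_rho : r <= radial K theta := radial_ge (ltW r0) Kr ray_le.
have := support_fun_ge_ball cov (ltW r0) rB u1.
rewrite -hu dotpZr => r_rhod.
have d0 : 0 <= dotp u theta.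
  by rewrite -(pmulr_rge0 _ (lt_le_trans r0 r_rho)) (le_trans (ltW r0)).
apply: le_trans (ler_wpM2r (ltW s0) r_rhod) _.
by rewrite mulrAC -[leRHS]mul1r ler_wpM2r // -ler_pdivlMr // div1r.
Qed.
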